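(* Let $A=\cup_{n\ge0}A_n$ be a connected filtered (commutative) bialgebra. Then the free commutative extended Rota-Baxter algebra $\text{Ш}_e(A)$ on $A$, with the bialgebra structure $(\text{Ш}_e(A),\diamond,u_e,\Delta_e,\varepsilon_e)$, is also a connected filtered bialgebra, and hence a Hopf algebra.
   Context: $\mathbf{k}$ is a commutative unitary ring, $\lambda,\kappa\in\mathbf{k}$, $\mu$ a root of $t^2-\lambda t+\kappa$. A bialgebra $H=(H,m_H,\mu_H,\Delta_H,\varepsilon_H)$ is filtered if there are submodules $H_n$, $n\ge0$, with $H_n\subseteq H_{n+1}$, $H=\cup_n H_n$, $H_pH_q\subseteq H_{p+q}$, $\Delta_H(H_n)\subseteq\bigoplus_{p+q=n}H_p\otimes H_q$, and $H_n=\mathrm{im}\,\mu_H\oplus(H_n\cap\ker\varepsilon_H)$; it is connected if $H_0=\mathrm{im}\,\mu_H=\mathbf{k}1_H$. A connected filtered bialgebra is a Hopf algebra. $(\text{Ш}_e(A),\diamond,P_e,j_A)$ is the free commutative extended Rota-Baxter algebra of weight $(\lambda,\kappa)$ on $A$ (operators satisfying $P(x)P(y)=P(xP(y))+P(P(x)y)+\lambda P(xy)+\kappa xy$), with $\text{Ш}_e(A)=\bigoplus_{n\ge1}A^{\otimes n}$ and $P_e(\mathfrak{a})=1_A\otimes\mathfrak{a}$; $u_e(c)=c1_A$; $\varepsilon_e$ is the unique extended Rota-Baxter algebra homomorphism $\text{Ш}_e(A)\to\mathbf{k}$ with $\varepsilon_e\circ j_A=\varepsilon_A$, $\varepsilon_e\circ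 P_e=-\mu\varepsilon_e$; $\Delta_e$ is the unique extended Rota-Baxter algebra homomorphism $\text{Ш}_e(A)\to\text{Ш}_e(A)\otimes\text{Ш}_e(A)$ with $\Delta_e\circ j_A=\Delta_A$ and $\Delta_e\circ P_e=\bar P\circ\Delta_e$, $\bar P(\mathfrak{a}\otimes\mathfrak{b})=P_e(\mathfrak{a})\otimes\varepsilon_e(\mathfrak{b})1_A+\mu\mathfrak{a}\otimes\varepsilon_e(\mathfrak{b})1_A+\mathfrak{a}\otimes P_e(\mathfrak{b})$. The filtration on $\text{Ш}_e(A)$ used: $\deg(a_0\otimes\cdots\otimes a_m)=\sum_i\deg(a_i)+m$ with $\deg(a)=\min\{k: a\in A_k\}$. *)

From HB Require Import structures.
From mathcomp Require Import all_boot all_order all_algebra.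
Set Implicit Arguments. Unset Strict Implicit. Unset Printing Implicit Defensive.
Import GRing.Theory.
Local Open Scope ring_scope.

Section Defs.
Variable k : comPzRingType.

Definition klinear (M N : lmodType k) (f : M -> N) :=
  forall (a : k) x y, f (a *: x + y) = a *: f x + f y.

Definition kbilinear (M N P : lmodType k) (f : M -> N -> P) :=
  (forall m, klinear (f m)) /\ (forall n, klinear (fun m => f m n)).

Definition induced (M N T P : lmodType k) (t : M -> N -> T) (f : M -> N -> P)
  (g : T -> P) := klinear g /\ forall m n, g (t m n) = f m n.

Definition is_tensor (M N T : lmodType k) (t : M -> N -> T) :=
  kbilinear t /\
  forall (P : lmodType k) (f : M -> N -> P), kbilinear f ->
    exists g : T -> P, induced t f g /\
      forall g' : T -> P, induced t f g' -> forall x, g' x = g x.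

Definition is_tensor_alg (A B T : algType k) (t : A -> B -> T) :=
  is_tensor t /\ t 1 1 = 1 /\
  forall a b c d, t (a * c) (b * d) = t a b * t c d.

Definition alg_hom (A B : algType k) (f : A -> B) :=
  klinear f /\ f 1 = 1 /\ forall x y, f (x * y) = f x * f y.

Definition alg_hom_k (A : algType k) (f : A -> k) :=
  (forall (a : k) x y, f (a *: x + y) = a * f x + f y) /\ f 1 = 1 /\
  forall x y, f (x * y) = f x * f y.

Definition assoc_spec (H HH HL HR : lmodType k) (t : H -> H -> HH)
  (tL : HH -> H -> HL) (tR : H -> HH -> HR) (al : HL -> HR) :=
  klinear al /\ forall a b c, al (tL (t a b) c) = tR a (t b c).

(* Bialgebra (H, m, u, Delta, eps); H (x) H = (HH, t), (H(x)H)(x)H = (HL, tL),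
   H(x)(H(x)H) = (HR, tR). *)
Definition is_bialgebra (H HH : algType k) (t : H -> H -> HH)
  (HL HR : lmodType k) (tL : HH -> H -> HL) (tR : H -> HH -> HR)
  (Delta : H -> HH) (eps : H -> k) :=
  alg_hom Delta /\ alg_hom_k eps /\
  (* coassociativity: (Delta (x) id) Delta = (id (x) Delta) Delta *)
  (forall (f1 : HH -> HL) (f2 : HH -> HR) (al : HL -> HR),
     induced t (fun a b => tL (Delta a) b) f1 ->
     induced t (fun a b => tR a (Delta b)) f2 ->
     assoc_spec t tL tR al ->
     forall x, al (f1 (Delta x)) = f2 (Delta x)) /\
  (* counit: (eps (x) id) Delta = id = (id (x) eps) Delta *)
  (forall g : HH -> H, induced t (fun a b => eps a *: b) g ->
     forall x, g (Delta x) = x) /\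
  (forall g : HH -> H, induced t (fun a b => eps b *: a) g ->
     forall x, g (Delta x) = x).

Definition has_antipode (H HH : algType k) (t : H -> H -> HH)
  (Delta : H -> HH) (eps : H -> k) :=
  exists s : H -> H, klinear s /\
    forall g1 g2 : HH -> H,
      induced t (fun a b => s a * b) g1 ->
      induced t (fun a b => a * s b) g2 ->
      forall x, g1 (Delta x) = eps x *: 1 /\ g2 (Delta x) = eps x *: 1.

Definition submodule (M : lmodType k) (U : M -> Prop) :=
  U 0 /\ forall (a : k) x y, U x -> U y -> U (a *: x + y).

Inductive span (M : lmodType k) (G : M -> Prop) : M -> Prop :=
| span0 : span G 0
| span_gen x : G x -> span G x
| span_comb (a : k) x y : span G x -> span G y -> span G (a *: x + y).

(* Filtered bialgebra with filtration Hf (H_n = Hf n); the condition on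
   Delta uses the image of H_p (x) H_q in H (x) H. *)
Definition is_filtered (H HH : algType k) (t : H -> H -> HH)
  (Delta : H -> HH) (eps : H -> k) (Hf : nat -> H -> Prop) :=
  (forall n, submodule (Hf n)) /\
  (forall n x, Hf n x -> Hf n.+1 x) /\
  (forall x, exists n, Hf n x) /\
  (forall p q x y, Hf p x -> Hf q y -> Hf (p + q)%N (x * y)) /\
  (forall n x, Hf n x ->
     span (fun z => exists p q u v, (p + q = n)%N /\ Hf p u /\ Hf q v /\ z = t u v)
          (Delta x)) /\
  (* H_n = im u (+) (H_n cap ker eps) *)
  (forall n,
     (forall c : k, Hf n (c *: 1)) /\
     (forall x, Hf n x -> exists (c : k) y, Hf n y /\ eps y = 0 /\ x = c *: 1 + y) /\
     (forall c : k, Hf n (c *: 1) -> eps (c *: 1) = 0 -> c *: (1 : H) = 0)).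

Definition is_connected_filtered (H HH : algType k) (t : H -> H -> HH)
  (Delta : H -> HH) (eps : H -> k) (Hf : nat -> H -> Prop) :=
  is_filtered t Delta eps Hf /\
  forall x, Hf 0%N x <-> exists c : k, x = c *: 1.

Definition is_extRB (lambda kappa : k) (R : algType k) (P : R -> R) :=
  klinear P /\
  forall x y, P x * P y = P (x * P y) + P (P x * y) + lambda *: P (x * y)
                          + kappa *: (x * y).

Definition is_free_comm_extRB (lambda kappa : k) (A S : comAlgType k)
  (P : S -> S) (j : A -> S) :=
  is_extRB lambda kappa P /\ alg_hom j /\
  forall (R : comAlgType k) (Q : R -> R) (f : A -> R),
    is_extRB lambda kappa Q -> alg_hom f ->
    exists g : S -> R, (alg_hom g /\ (forall x, g (P x) = Q (g x)) /\
                        forall a, g (j a) = f a) /\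
      forall g' : S -> R, (alg_hom g' /\ (forall x, g' (P x) = Q (g' x)) /\
                           forall a, g' (j a) = f a) -> forall x, g' x = g x.

Definition is_deg (A : lmodType k) (Af : nat -> A -> Prop) (a : A) (d : nat) :=
  Af d a /\ forall e, Af e a -> (d <= e)%N.

(* the element a0 (x) a1 (x) ... (x) am of Sha_e(A) = a0 <> P(a1 (x) ... (x) am) *)
Fixpoint sha_word (A S : algType k) (P : S -> S) (j : A -> S) (a0 : A)
  (l : seq A) : S :=
  match l with
  | [::] => j a0
  | a1 :: l' => j a0 * P (sha_word P j a1 l')
  end.

Definition sha_filtration (A S : algType k) (P : S -> S) (j : A -> S)
  (Af : nat -> A -> Prop) (n : nat) : S -> Prop :=
  span (fun z => exists (a0 : A) (l : seq A) (ds : seq nat),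
          z = sha_word P j a0 l /\
          size ds = (size l).+1 /\
          (forall i, (i < (size l).+1)%N -> is_deg Af (nth a0 (a0 :: l) i) (nth 0%N ds i)) /\
          (sumn ds + size l <= n)%N).

End Defs.

From Pilot Require Import Defs.
From HB Require Import structures.
From mathcomp Require Import all_boot all_order all_algebra.
From mathcomp Require Import boolp functions zify.
Import GRing.Theory.
Local Open Scope ring_scope.
Set Implicit Arguments. Unset Strict Implicit. Unset Printing Implicit Defensive.

(* Every identity between maps out of Sha_e(A) is proved by the universal property of the
   free extended Rota-Baxter algebra: two algebra maps that agree on j_A(A) and intertwine
   P_e with compatible operators coincide.  For the counit laws, (eps_e (x) id) Delta_e
   and (id (x) eps_e) Delta_e are Rota-Baxter endomorphisms fixing j_A(A), hence the
   identity.  For coassociativity, (Delta_e (x) id) Delta_e and (id (x) Delta_e) Delta_e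
   are multiplicative, intertwine P_e with the operators induced by Pbar on the triple
   tensor products, and agree on j_A(A) because A is coassociative.
   The degree of a0 (x) ... (x) am is subadditive under the product because the
   Rota-Baxter identity rewrites P(u) P(v) through P(u P(v)), P(P(u) v), P(uv) and uv,
   and Delta_e respects it because Pbar raises the degree by one.  Finally every
   connected filtered bialgebra is Hopf, with antipode sum_m (-1)^m (id - u eps)^{*m},
   a finite sum on each H_n because (id - u eps)^{*m} vanishes on H_n for m > n. *)

(** * Linear maps and tensor products *)

Section LinearAlgebra.
Variable k : comPzRingType.

Section LinearMap.
Variables (M N : lmodType k) (f : M -> N).
Hypothesis f_lin : klinear f.

Lemma klinear0 : f 0 = 0.
Proof.
have := f_lin 1 0 0; rewrite scaler0 addr0 scale1r => /(congr1 (fun z => z - f 0)).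
by rewrite subrr addrK => <-.
Qed.

Lemma klinearD x y : f (x + y) = f x + f y.
Proof. by have := f_lin 1 x y; rewrite !scale1r. Qed.

Lemma klinearZ a x : f (a *: x) = a *: f x.
Proof. by have := f_lin a x 0; rewrite !addr0 klinear0 addr0. Qed.

End LinearMap.

Lemma klinear_id (M : lmodType k) : klinear (fun x : M => x).
Proof. by []. Qed.

Lemma klinear_comp (M N P : lmodType k) (f : M -> N) (g : N -> P) :
  klinear f -> klinear g -> klinear (fun x => g (f x)).
Proof. by move=> f_lin g_lin a x y; rewrite f_lin g_lin. Qed.

Lemma klinear_lincomb (M N : lmodType k) (c : k) (f g : M -> N) :
  klinear f -> klinear g -> klinear (fun x => c *: f x + g x).
Proof.
move=> f_lin g_lin a x y; rewrite f_lin g_lin !scalerDr !scalerA [c * a]mulrC.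
by rewrite addrACA.
Qed.

Lemma klinear_add (M N : lmodType k) (f g : M -> N) :
  klinear f -> klinear g -> klinear (fun x => f x + g x).
Proof.
by move=> f_lin g_lin; have := klinear_lincomb 1 f_lin g_lin; under eq_fun do rewrite scale1r.
Qed.

Lemma klinear_scale (M N : lmodType k) (c : k) (f : M -> N) :
  klinear f -> klinear (fun x => c *: f x).
Proof. by move=> f_lin a x y; rewrite f_lin scalerDr !scalerA mulrC. Qed.

Lemma klinear_cst0 (M N : lmodType k) : klinear (fun _ : M => 0 : N).
Proof. by move=> a x y; rewrite scaler0 addr0. Qed.

Lemma klinear_mulr (R : lalgType k) (w : R) : klinear (fun z : R => z * w).
Proof. by move=> a x y; rewrite mulrDl scalerAl. Qed.

Lemma klinear_mull (R : algType k) (w : R) : klinear (fun z : R => w * z).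
Proof. by move=> a x y; rewrite mulrDr scalerAr. Qed.

Lemma kbilinear_mul (M N : lmodType k) (R : algType k) (f : M -> R) (g : N -> R) :
  klinear f -> klinear g -> kbilinear (fun a b => f a * g b).
Proof.
move=> f_lin g_lin; split=> [m|n]; first exact: klinear_comp g_lin (klinear_mull _).
exact: klinear_comp f_lin (klinear_mulr _).
Qed.

Lemma klinear_fun (M N : lmodType k) (X : Type) (F : M -> X -> N) :
  (forall w, klinear (fun m => F m w)) -> klinear (F : M -> (X -> N)).
Proof. by move=> F_lin a x y; apply: funext => w /=; rewrite F_lin. Qed.

Lemma klinear_eval (M N : lmodType k) (X : Type) (F : M -> (X -> N)) w :
  klinear F -> klinear (fun m => F m w).
Proof. by move=> F_lin a x y; rewrite F_lin. Qed.

Definition kform (M : lmodType k) (f : M -> k) :=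
  forall (a : k) x y, f (a *: x + y) = a * f x + f y.

Section Form.
Variables (M : lmodType k) (f : M -> k).
Hypothesis f_form : kform f.

Lemma kform0 : f 0 = 0.
Proof.
have := f_form 1 0 0; rewrite scaler0 addr0 mul1r => /(congr1 (fun z => z - f 0)).
by rewrite subrr addrK => <-.
Qed.

Lemma kformZ a x : f (a *: x) = a * f x.
Proof. by have := f_form a x 0; rewrite !addr0 kform0 addr0. Qed.

Lemma kformB x y : f (x - y) = f x - f y.
Proof. by have := f_form (-1) y x; rewrite scaleN1r mulN1r addrC [_ + f x]addrC. Qed.

Lemma kform_scale1 (N : lalgType k) : klinear (fun x => f x *: (1 : N)).
Proof. by move=> a x y; rewrite f_form scalerDl scalerA. Qed.

Lemma kbilinear_forml (N : lmodType k) : kbilinear (fun (a : M) (b : N) => f a *: b).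
Proof.
split=> [m|n] a u v /=; last by rewrite f_form scalerDl scalerA.
by rewrite scalerDr scalerA mulrC -scalerA.
Qed.

Lemma kbilinear_formr (N : lmodType k) : kbilinear (fun (b : N) (a : M) => f a *: b).
Proof.
split=> [m|n] a u v /=; first by rewrite f_form scalerDl scalerA.
by rewrite scalerDr scalerA mulrC -scalerA.
Qed.

End Form.

Section Span.
Variables (M : lmodType k) (G : M -> Prop).

Lemma spanD x y : Defs.span G x -> Defs.span G y -> Defs.span G (x + y).
Proof. by move=> Gx Gy; rewrite -[x]scale1r; apply: span_comb. Qed.

Lemma spanZ a x : Defs.span G x -> Defs.span G (a *: x).
Proof. by move=> Gx; rewrite -[a *: x]addr0; apply: span_comb => //; exact: span0. Qed.

Lemma span_linear_image (N : lmodType k) (G' : N -> Prop) (f : M -> N) :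
  klinear f -> (forall z, G z -> Defs.span G' (f z)) ->
  forall z, Defs.span G z -> Defs.span G' (f z).
Proof.
move=> f_lin fG z; elim=> [|x Gx|a x y _ IHx _ IHy]; last by rewrite f_lin; apply: span_comb.
  by rewrite (klinear0 f_lin); exact: span0.
exact: fG.
Qed.

Lemma span_linear_ext (N : lmodType k) (f g : M -> N) :
  klinear f -> klinear g -> (forall z, G z -> f z = g z) -> forall z, Defs.span G z -> f z = g z.
Proof.
move=> f_lin g_lin fg z; elim=> [|x Gx|a x y _ IHx _ IHy]; last by rewrite f_lin g_lin IHx IHy.
  by rewrite !klinear0.
exact: fg.
Qed.

End Span.

(* Junk value 0 when no map induced by f exists. *)
Definition tensor_lift (M N T P : lmodType k) (t : M -> N -> T) (f : M -> N -> P) : T -> P :=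
  match pselect (exists g, induced t f g) with
  | left e => projT1 (cid e)
  | right _ => fun _ => 0
  end.

Section Tensor.
Variables (M N T : lmodType k) (t : M -> N -> T).
Hypothesis t_tensor : is_tensor t.

Lemma tensor_liftP (P : lmodType k) (f : M -> N -> P) :
  kbilinear f -> induced t f (tensor_lift t f).
Proof.
move=> f_bil; rewrite /tensor_lift; case: pselect => [e|]; first by case: (cid e).
by case; have [g [? _]] := t_tensor.2 P f f_bil; exists g.
Qed.

Lemma tensor_lift_linear (P : lmodType k) (f : M -> N -> P) :
  kbilinear f -> klinear (tensor_lift t f).
Proof. by move=> /tensor_liftP[]. Qed.

Lemma tensor_liftE (P : lmodType k) (f : M -> N -> P) :
  kbilinear f -> forall m n, tensor_lift t f (t m n) = f m n.
Proof. by move=> /tensor_liftP[]. Qed.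

Lemma tensor_linearl m : klinear (t m). Proof. exact: t_tensor.1.1. Qed.
Lemma tensor_linearr n : klinear (fun m => t m n). Proof. exact: t_tensor.1.2. Qed.

Lemma tensor_ext (P : lmodType k) (g g' : T -> P) : klinear g -> klinear g' ->
  (forall m n, g (t m n) = g' (t m n)) -> forall x, g x = g' x.
Proof.
move=> g_lin g'_lin gg' x.
have f_bil : kbilinear (fun m n => g (t m n)).
  by split=> [m|n]; apply: klinear_comp g_lin; [apply: tensor_linearl | apply: tensor_linearr].
have [G [_ G_uniq]] := t_tensor.2 P _ f_bil.
by rewrite (G_uniq g) ?(G_uniq g') //; split.
Qed.

Lemma tensor_lift_unique (P : lmodType k) (f : M -> N -> P) (g : T -> P) :
  kbilinear f -> induced t f g -> forall x, g x = tensor_lift t f x.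
Proof.
move=> f_bil [g_lin gE]; apply: tensor_ext => //; first exact: tensor_lift_linear.
by move=> m n; rewrite gE tensor_liftE.
Qed.

Lemma tensor_lift_param (C P : lmodType k) (f : C -> M -> N -> P) :
  (forall c, kbilinear (f c)) -> (forall m n, klinear (fun c => f c m n)) ->
  forall x, klinear (fun c => tensor_lift t (f c) x).
Proof.
move=> f_bil f_lin x a c1 c2 /=.
apply: (tensor_ext (g := tensor_lift t (f (a *: c1 + c2)))
  (g' := fun x => a *: tensor_lift t (f c1) x + tensor_lift t (f c2) x)).
- exact: tensor_lift_linear.
- by apply: klinear_lincomb; apply: tensor_lift_linear.
- by move=> m n; rewrite !tensor_liftE // f_lin.
Qed.

End Tensor.

Lemma tensor3_ext (M N T N2 T2 P : lmodType k) (t : M -> N -> T) (t2 : T -> N2 -> T2) :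
  is_tensor t -> is_tensor t2 -> forall g g' : T2 -> P, klinear g -> klinear g' ->
  (forall a b c, g (t2 (t a b) c) = g' (t2 (t a b) c)) -> forall x, g x = g' x.
Proof.
move=> t_tensor t2_tensor g g' g_lin g'_lin gg'; apply: (tensor_ext t2_tensor) => // Y c.
apply: (tensor_ext t_tensor (g := fun Y => g (t2 Y c)) (g' := fun Y => g' (t2 Y c))) => //;
  by apply: klinear_comp => //; exact: tensor_linearr.
Qed.

Definition assoc_map (H HH HL HR : lmodType k) (t : H -> H -> HH) (tL : HH -> H -> HL)
  (tR : H -> HH -> HR) : HL -> HR :=
  tensor_lift tL (fun Y c => tensor_lift t (fun a b => tR a (t b c)) Y).

Lemma assoc_mapP (H HH HL HR : lmodType k) (t : H -> H -> HH) (tL : HH -> H -> HL)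
  (tR : H -> HH -> HR) : is_tensor t -> is_tensor tL -> is_tensor tR ->
  assoc_spec t tL tR (assoc_map t tL tR).
Proof.
move=> t_tensor tL_tensor tR_tensor.
have inner_bil c : kbilinear (fun a b => tR a (t b c)).
  split=> [m|n]; last exact: tensor_linearr.
  exact: klinear_comp (tensor_linearr t_tensor c) (tensor_linearl tR_tensor m).
have outer_bil : kbilinear (fun Y c => tensor_lift t (fun a b => tR a (t b c)) Y).
  split=> [Y|c]; last exact: tensor_lift_linear.
  apply: (tensor_lift_param t_tensor inner_bil) => m n.
  exact: klinear_comp (tensor_linearl t_tensor n) (tensor_linearl tR_tensor m).
split; first exact: tensor_lift_linear.
by move=> a b c; rewrite /assoc_map (tensor_liftE tL_tensor) // (tensor_liftE t_tensor).
Qed.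

Lemma tensor_alg_multiplicative (A B T : algType k) (t : A -> B -> T) (P : lmodType k)
  (mulP : P -> P -> P) (g : T -> P) :
  is_tensor_alg t -> kbilinear mulP -> klinear g ->
  (forall a b c d, g (t (a * c) (b * d)) = mulP (g (t a b)) (g (t c d))) ->
  forall Z Z', g (Z * Z') = mulP (g Z) (g Z').
Proof.
move=> [t_tensor [_ tM]] [mulP_linr mulP_linl] g_lin gM Z Z'.
apply: (tensor_ext t_tensor (g := fun Z => g (Z * Z')) (g' := fun Z => mulP (g Z) (g Z'))).
- exact: klinear_comp (klinear_mulr _) g_lin.
- exact: klinear_comp g_lin (mulP_linl _).
move=> a b; apply: (tensor_ext t_tensor (g := fun W => g (t a b * W))
                                        (g' := fun W => mulP (g (t a b)) (g W))).
- exact: klinear_comp (klinear_mull _) g_lin.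
- exact: klinear_comp g_lin (mulP_linr _).
by move=> c d; rewrite -tM gM.
Qed.

Section TensorMul.
Variables (A B : algType k) (T : lmodType k) (t : A -> B -> T).
Hypothesis t_tensor : is_tensor t.

(* The triple tensor products of the bialgebra axioms are only given as modules; this is
   their algebra product. *)
Definition tensor_mul : T -> T -> T :=
  tensor_lift t (fun a b => (tensor_lift t (fun c d => t (a * c) (b * d)) : T -> T)).

Let right_bil a b : kbilinear (fun c d => t (a * c) (b * d)).
Proof.
split=> [c|d].
  exact: klinear_comp (klinear_mull b) (tensor_linearl t_tensor _).
exact: klinear_comp (klinear_mull a) (tensor_linearr t_tensor _).
Qed.

Let left_bil : kbilinear (fun a b => (tensor_lift t (fun c d => t (a * c) (b * d)) : T -> T)).
Proof.
split=> [a|b]; apply: klinear_fun => x.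
  apply: (tensor_lift_param t_tensor (f := fun b c d => t (a * c) (b * d))) => [b|c d].
    exact: right_bil.
  exact: klinear_comp (klinear_mulr d) (tensor_linearl t_tensor _).
apply: (tensor_lift_param t_tensor (f := fun a c d => t (a * c) (b * d))) => [a|c d].
  exact: right_bil.
exact: klinear_comp (klinear_mulr c) (tensor_linearr t_tensor _).
Qed.

Lemma tensor_mulE a b c d : tensor_mul (t a b) (t c d) = t (a * c) (b * d).
Proof.
by rewrite /tensor_mul (tensor_liftE t_tensor left_bil) (tensor_liftE t_tensor (right_bil a b)).
Qed.

Lemma tensor_mul_bilinear : kbilinear tensor_mul.
Proof.
have linl W : klinear (fun E => tensor_mul E W).
  exact: klinear_eval (tensor_lift_linear t_tensor left_bil).
split=> [E|W]; last exact: linl.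
move=> a x y.
apply: (tensor_ext t_tensor (g := fun E => tensor_mul E (a *: x + y))
                            (g' := fun E => a *: tensor_mul E x + tensor_mul E y)).
- exact: linl.
- exact: klinear_lincomb.
move=> c d; rewrite /tensor_mul !(tensor_liftE t_tensor left_bil).
exact: (tensor_lift_linear t_tensor (right_bil c d)).
Qed.

End TensorMul.

End LinearAlgebra.

(** * Connected filtered bialgebras are Hopf algebras *)

Section ConnectedFilteredAntipode.
Variables (k : comPzRingType) (H HH : algType k) (t : H -> H -> HH)
  (HL HR : lmodType k) (tL : HH -> H -> HL) (tR : H -> HH -> HR)
  (Delta : H -> HH) (eps : H -> k) (Hf : nat -> H -> Prop).
Hypotheses (t_tensor_alg : is_tensor_alg t) (tL_tensor : is_tensor tL)
  (tR_tensor : is_tensor tR) (H_bialg : is_bialgebra t tL tR Delta eps)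
  (H_connected : is_connected_filtered t Delta eps Hf).

Let t_tensor : is_tensor t := t_tensor_alg.1.
Let Delta_lin : klinear Delta := H_bialg.1.1.
Let eps_form : kform eps := H_bialg.2.1.1.
Let eps1 : eps 1 = 1 := H_bialg.2.1.2.1.
Let H_filtered := H_connected.1.

Definition conv (f g : H -> H) (x : H) : H := tensor_lift t (fun a b => f a * g b) (Delta x).

Definition ueps (x : H) : H := eps x *: 1.

Definition augproj (x : H) : H := x - ueps x.

Lemma ueps_linear : klinear ueps. Proof. exact: kform_scale1. Qed.

Lemma augproj_linear : klinear augproj.
Proof.
move=> a x y; rewrite /augproj /ueps eps_form scalerDl -scalerA scalerBr.
by rewrite addrACA opprD.
Qed.

Lemma augproj_scalar c : augproj (c *: 1) = 0.
Proof. by rewrite /augproj /ueps (kformZ eps_form) eps1 mulr1 subrr. Qed.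

Lemma ueps_add_augproj x : ueps x + augproj x = x.
Proof. by rewrite /augproj addrC subrK. Qed.

Lemma conv_linear f g : klinear f -> klinear g -> klinear (conv f g).
Proof.
move=> f_lin g_lin; apply: klinear_comp Delta_lin _.
exact: (tensor_lift_linear t_tensor (kbilinear_mul f_lin g_lin)).
Qed.

Lemma conv_lincombl f1 f2 g c x : klinear f1 -> klinear f2 -> klinear g ->
  conv (fun y => c *: f1 y + f2 y) g x = c *: conv f1 g x + conv f2 g x.
Proof.
move=> f1_lin f2_lin g_lin; have f_lin := klinear_lincomb c f1_lin f2_lin.
have lin1 := tensor_lift_linear t_tensor (kbilinear_mul f1_lin g_lin).
have lin2 := tensor_lift_linear t_tensor (kbilinear_mul f2_lin g_lin).
have lin := tensor_lift_linear t_tensor (kbilinear_mul f_lin g_lin).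
apply: (tensor_ext t_tensor lin (klinear_lincomb c lin1 lin2)) => m n.
by rewrite !(tensor_liftE t_tensor) ?mulrDl ?scalerAl //; exact: kbilinear_mul.
Qed.

Lemma conv_lincombr f g1 g2 c x : klinear f -> klinear g1 -> klinear g2 ->
  conv f (fun y => c *: g1 y + g2 y) x = c *: conv f g1 x + conv f g2 x.
Proof.
move=> f_lin g1_lin g2_lin; have g_lin := klinear_lincomb c g1_lin g2_lin.
have lin1 := tensor_lift_linear t_tensor (kbilinear_mul f_lin g1_lin).
have lin2 := tensor_lift_linear t_tensor (kbilinear_mul f_lin g2_lin).
have lin := tensor_lift_linear t_tensor (kbilinear_mul f_lin g_lin).
apply: (tensor_ext t_tensor lin (klinear_lincomb c lin1 lin2)) => m n.
by rewrite !(tensor_liftE t_tensor) ?mulrDr ?scalerAr //; exact: kbilinear_mul.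
Qed.

Lemma conv_ueps_r f x : klinear f -> conv f ueps x = f x.
Proof.
move=> f_lin; have counit := tensor_liftP t_tensor (kbilinear_formr eps_form H).
rewrite -{2}(H_bialg.2.2.2.2 _ counit x) /conv.
have lin := tensor_lift_linear t_tensor (kbilinear_mul f_lin ueps_linear).
apply: (tensor_ext t_tensor lin (klinear_comp counit.1 f_lin)) => m n.
rewrite (tensor_liftE t_tensor (kbilinear_mul f_lin ueps_linear)) counit.2.
by rewrite (klinearZ f_lin) /ueps -scalerAr mulr1.
Qed.

Lemma conv_ueps_l f x : klinear f -> conv ueps f x = f x.
Proof.
move=> f_lin; have counit := tensor_liftP t_tensor (kbilinear_forml eps_form H).
rewrite -{2}(H_bialg.2.2.2.1 _ counit x) /conv.
have lin := tensor_lift_linear t_tensor (kbilinear_mul ueps_linear f_lin).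
apply: (tensor_ext t_tensor lin (klinear_comp counit.1 f_lin)) => m n.
rewrite (tensor_liftE t_tensor (kbilinear_mul ueps_linear f_lin)) counit.2.
by rewrite (klinearZ f_lin) /ueps -scalerAl mul1r.
Qed.

Let DeltaL := tensor_lift t (fun a b => tL (Delta a) b).
Let DeltaR := tensor_lift t (fun a b => tR a (Delta b)).

Let DeltaL_bil : kbilinear (fun a b => tL (Delta a) b).
Proof.
split=> [m|n]; first exact: tensor_linearl.
exact: klinear_comp Delta_lin (tensor_linearr tL_tensor n).
Qed.

Let DeltaR_bil : kbilinear (fun a b => tR a (Delta b)).
Proof.
split=> [m|n]; last exact: tensor_linearr.
exact: klinear_comp Delta_lin (tensor_linearl tR_tensor m).
Qed.

Let al_spec := assoc_mapP t_tensor tL_tensor tR_tensor.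

Section ConvAssoc.
Variables f g h : H -> H.
Hypotheses (f_lin : klinear f) (g_lin : klinear g) (h_lin : klinear h).

Let fg_bil := kbilinear_mul f_lin g_lin.
Let gh_bil := kbilinear_mul g_lin h_lin.

Let mulL := tensor_lift tL (fun Y c => tensor_lift t (fun a b => f a * g b) Y * h c).
Let mulR := tensor_lift tR (fun a Y => f a * tensor_lift t (fun b c => g b * h c) Y).

Let mulL_bil : kbilinear (fun Y c => tensor_lift t (fun a b => f a * g b) Y * h c).
Proof.
split=> [Y|c]; first exact: klinear_comp h_lin (klinear_mull _).
exact: klinear_comp (tensor_lift_linear t_tensor fg_bil) (klinear_mulr _).
Qed.

Let mulR_bil : kbilinear (fun a Y => f a * tensor_lift t (fun b c => g b * h c) Y).
Proof.
split=> [a|Y]; first exact: klinear_comp (tensor_lift_linear t_tensor gh_bil) (klinear_mull _).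
exact: klinear_comp f_lin (klinear_mulr _).
Qed.

Lemma conv_liftL Y : tensor_lift t (fun a b => conv f g a * h b) Y = mulL (DeltaL Y).
Proof.
have fgh_bil := kbilinear_mul (conv_linear f_lin g_lin) h_lin.
move: Y; apply: (tensor_ext t_tensor (tensor_lift_linear t_tensor fgh_bil)
  (klinear_comp (tensor_lift_linear t_tensor DeltaL_bil) (tensor_lift_linear tL_tensor mulL_bil))).
move=> a b; rewrite (tensor_liftE t_tensor fgh_bil) /DeltaL (tensor_liftE t_tensor DeltaL_bil).
by rewrite /mulL (tensor_liftE tL_tensor mulL_bil).
Qed.

Lemma conv_liftR Y : tensor_lift t (fun a b => f a * conv g h b) Y = mulR (DeltaR Y).
Proof.
have fgh_bil := kbilinear_mul f_lin (conv_linear g_lin h_lin).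
move: Y; apply: (tensor_ext t_tensor (tensor_lift_linear t_tensor fgh_bil)
  (klinear_comp (tensor_lift_linear t_tensor DeltaR_bil) (tensor_lift_linear tR_tensor mulR_bil))).
move=> a b; rewrite (tensor_liftE t_tensor fgh_bil) /DeltaR (tensor_liftE t_tensor DeltaR_bil).
by rewrite /mulR (tensor_liftE tR_tensor mulR_bil).
Qed.

Lemma mulR_assoc Z : mulR (assoc_map t tL tR Z) = mulL Z.
Proof.
move: Z; apply: (tensor3_ext t_tensor tL_tensor
  (klinear_comp al_spec.1 (tensor_lift_linear tR_tensor mulR_bil))
  (tensor_lift_linear tL_tensor mulL_bil)) => a b c.
rewrite al_spec.2 /mulR (tensor_liftE tR_tensor mulR_bil) (tensor_liftE t_tensor gh_bil).
by rewrite /mulL (tensor_liftE tL_tensor mulL_bil) (tensor_liftE t_tensor fg_bil) mulrA.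
Qed.

Lemma conv_assoc x : conv (conv f g) h x = conv f (conv g h) x.
Proof.
have coassoc := H_bialg.2.2.1 DeltaL DeltaR _ (tensor_liftP t_tensor DeltaL_bil)
  (tensor_liftP t_tensor DeltaR_bil) al_spec x.
by rewrite /conv conv_liftL conv_liftR -coassoc mulR_assoc.
Qed.

End ConvAssoc.

Lemma Hf_submodule n : submodule (Hf n). Proof. exact: H_filtered.1. Qed.

Lemma Hf_mono n m x : (n <= m)%N -> Hf n x -> Hf m x.
Proof.
move=> /subnK <-; elim: (m - n)%N => [//|d IH] Hx.
by rewrite addSn; apply: H_filtered.2.1; apply: IH.
Qed.

Fixpoint augproj_pow (m : nat) : H -> H :=
  if m is m'.+1 then conv (augproj_pow m') augproj else ueps.

Lemma augproj_pow_linear m : klinear (augproj_pow m).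
Proof.
by elim: m => [|m IH] /=; [exact: ueps_linear | exact: conv_linear IH augproj_linear].
Qed.

(* Delta x is a sum of u (x) v with u in H_p, v in H_q, p + q = n: if q = 0 then v is a
   scalar, killed by augproj, and otherwise p < n. *)
Lemma augproj_pow_vanish m n x : (n < m)%N -> Hf n x -> augproj_pow m x = 0.
Proof.
elim: m n x => [//|m IH] n x lt_nm Hx /=.
have pow_bil := kbilinear_mul (augproj_pow_linear m) augproj_linear.
apply: (span_linear_ext (tensor_lift_linear t_tensor pow_bil) (@klinear_cst0 _ _ _)
  _ (H_filtered.2.2.2.2.1 n x Hx)).
move=> _ [p [q [u [v [Epq [Hu [Hv ->]]]]]]]; rewrite (tensor_liftE t_tensor) //.
case: q Epq Hv => [|q] Epq Hv.
  by have [c ->] := (H_connected.2 v).1 Hv; rewrite augproj_scalar mulr0.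
by rewrite (IH p u) ?mul0r //; lia.
Qed.

Lemma conv_augproj_pow m x : conv augproj (augproj_pow m) x = augproj_pow m.+1 x.
Proof.
elim: m x => [|m IH] x /=.
  by rewrite conv_ueps_r ?conv_ueps_l //; exact: augproj_linear.
rewrite -(conv_assoc augproj_linear (augproj_pow_linear m) augproj_linear).
by rewrite (_ : conv augproj (augproj_pow m) = augproj_pow m.+1) //; apply: funext.
Qed.

Lemma conv_pow_id m x : conv (augproj_pow m) id x = augproj_pow m x + augproj_pow m.+1 x.
Proof.
have -> : id = fun y => 1 *: ueps y + augproj y.
  by apply: funext => y; rewrite scale1r ueps_add_augproj.
rewrite conv_lincombr; [|exact: augproj_pow_linear|exact: ueps_linear|exact: augproj_linear].
by rewrite scale1r conv_ueps_r //; exact: augproj_pow_linear.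
Qed.

Lemma conv_id_pow m x : conv id (augproj_pow m) x = augproj_pow m x + augproj_pow m.+1 x.
Proof.
have -> : id = fun y => 1 *: ueps y + augproj y.
  by apply: funext => y; rewrite scale1r ueps_add_augproj.
rewrite conv_lincombl; [|exact: ueps_linear|exact: augproj_linear|exact: augproj_pow_linear].
by rewrite scale1r conv_ueps_l ?conv_augproj_pow //; exact: augproj_pow_linear.
Qed.

Fixpoint antipode_trunc (n : nat) : H -> H :=
  if n is n'.+1 then fun x => (-1) ^+ n *: augproj_pow n x + antipode_trunc n' x
  else ueps.

Lemma antipode_truncS n x :
  antipode_trunc n.+1 x = (-1) ^+ n.+1 *: augproj_pow n.+1 x + antipode_trunc n x.
Proof. by []. Qed.

Lemma antipode_trunc_linear n : klinear (antipode_trunc n).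
Proof.
elim: n => [|n IH]; first exact: ueps_linear.
exact: klinear_lincomb (augproj_pow_linear n.+1) IH.
Qed.

Lemma antipode_trunc_stable n d x : Hf n x -> antipode_trunc (n + d) x = antipode_trunc n x.
Proof.
move=> Hx; elim: d => [|d IH]; first by rewrite addn0.
by rewrite addnS antipode_truncS IH (augproj_pow_vanish _ Hx) ?scaler0 ?add0r // ltnS leq_addr.
Qed.

Lemma conv_antipode_trunc_id n x :
  conv (antipode_trunc n) id x = ueps x + (-1) ^+ n *: augproj_pow n.+1 x.
Proof.
elim: n x => [|n IH] x.
  by rewrite expr0 scale1r; exact: (conv_pow_id 0 x).
rewrite conv_lincombl; [|exact: augproj_pow_linear|exact: antipode_trunc_linear|exact: klinear_id].
by rewrite IH conv_pow_id exprS mulN1r !scaleNr scalerDr opprD addrC -addrA addNKr.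
Qed.

Lemma conv_id_antipode_trunc n x :
  conv id (antipode_trunc n) x = ueps x + (-1) ^+ n *: augproj_pow n.+1 x.
Proof.
elim: n x => [|n IH] x.
  by rewrite expr0 scale1r; exact: (conv_id_pow 0 x).
rewrite conv_lincombr; [|exact: klinear_id|exact: augproj_pow_linear|exact: antipode_trunc_linear].
by rewrite IH conv_id_pow exprS mulN1r !scaleNr scalerDr opprD addrC -addrA addNKr.
Qed.

Theorem connected_filtered_antipode : has_antipode t Delta eps.
Proof.
have [level level_spec] := choice H_filtered.2.2.1.
have trunc_level n x : Hf n x -> antipode_trunc (level x) x = antipode_trunc n x.
  move=> Hx; rewrite -(antipode_trunc_stable (maxn n (level x) - level x) (level_spec x)).
  rewrite -(antipode_trunc_stable (maxn n (level x) - n) Hx).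
  by rewrite !subnKC ?leq_maxl ?leq_maxr.
pose s x := antipode_trunc (level x) x.
have s_lin : klinear s.
  move=> a x y; pose n := maxn (level x) (level y).
  have Hx : Hf n x := Hf_mono (leq_maxl _ _) (level_spec x).
  have Hy : Hf n y := Hf_mono (leq_maxr _ _) (level_spec y).
  have Hxy : Hf n (a *: x + y) by apply: (Hf_submodule n).2.
  by rewrite /s !(trunc_level n) // antipode_trunc_linear.
exists s; split=> // g1 g2 g1_ind g2_ind x.
have [n Hx] := H_filtered.2.2.1 x.
have DeltaHx := H_filtered.2.2.2.2.1 n x Hx.
have s_id_bil := kbilinear_mul s_lin (@klinear_id _ H).
have id_s_bil := kbilinear_mul (@klinear_id _ H) s_lin.
have trunc_id_bil := kbilinear_mul (antipode_trunc_linear n) (@klinear_id _ H).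
have id_trunc_bil := kbilinear_mul (@klinear_id _ H) (antipode_trunc_linear n).
rewrite (tensor_lift_unique t_tensor s_id_bil g1_ind) (tensor_lift_unique t_tensor id_s_bil g2_ind).
rewrite (span_linear_ext (tensor_lift_linear t_tensor s_id_bil)
  (tensor_lift_linear t_tensor trunc_id_bil) _ DeltaHx); last first.
  move=> _ [p [q [u [v [Epq [Hu [Hv ->]]]]]]].
  rewrite (tensor_liftE t_tensor s_id_bil) (tensor_liftE t_tensor trunc_id_bil).
  by rewrite /s (trunc_level n) //; apply: Hf_mono Hu; rewrite -Epq leq_addr.
rewrite (span_linear_ext (tensor_lift_linear t_tensor id_s_bil)
  (tensor_lift_linear t_tensor id_trunc_bil) _ DeltaHx); last first.
  move=> _ [p [q [u [v [Epq [Hu [Hv ->]]]]]]].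
  rewrite (tensor_liftE t_tensor id_s_bil) (tensor_liftE t_tensor id_trunc_bil).
  by rewrite /s (trunc_level n) //; apply: Hf_mono Hv; rewrite -Epq leq_addl.
have := conv_antipode_trunc_id n x; have := conv_id_antipode_trunc n x; rewrite /conv.
by rewrite (augproj_pow_vanish (ltnSn n) Hx) scaler0 addr0 => -> ->.
Qed.

End ConnectedFilteredAntipode.

(** * Induction on the free extended Rota-Baxter algebra *)

Section FreeExtRB.
Variables (k : comPzRingType) (lambda kappa : k) (A S : comAlgType k)
  (P : S -> S) (j : A -> S).
Hypothesis S_free : is_free_comm_extRB lambda kappa P j.

Lemma free_extRB_endo_id (h : S -> S) : alg_hom h -> (forall x, h (P x) = P (h x)) ->
  (forall a, h (j a) = j a) -> forall x, h x = x.
Proof.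
move=> h_hom hP hj x.
have [g [_ uniq]] := S_free.2.2 _ P j S_free.1 S_free.2.1.
have id_hom : alg_hom (fun x : S => x) by [].
have /= gx := uniq _ (conj id_hom (conj (fun=> erefl) (fun=> erefl))) x.
by rewrite (uniq h (conj h_hom (conj hP hj))) -gx.
Qed.

Section Induction.
Variable C : S -> Prop.
Hypotheses (C_lin : forall a x y, C x -> C y -> C (a *: x + y))
  (C_mul : forall x y, C x -> C y -> C (x * y)) (C_j : forall a, C (j a))
  (C_P : forall x, C x -> C (P x)).

Let Cb : {pred S} := fun x => `[< C x >].

Let C0 : C 0. Proof. by rewrite -(klinear0 S_free.2.1.1). Qed.
Let C1 : C 1. Proof. by rewrite -S_free.2.1.2.1. Qed.

Let Cb_closed : GRing.subsemialg_closed Cb.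
Proof.
split; first by apply/asboolP; exact: C1.
- split; first by apply/asboolP; exact: C0.
  by move=> x y /asboolP Cx /asboolP Cy; apply/asboolP; rewrite -[x]scale1r; apply: C_lin.
- by move=> a x /asboolP Cx; apply/asboolP; rewrite -[a *: x]addr0; apply: C_lin.
- by move=> x y /asboolP Cx /asboolP Cy; apply/asboolP; apply: C_mul.
Qed.

Let SubC := {x : S | x \in Cb}.
HB.instance Definition _ := [isSub for (@sval S _ : SubC -> S)].
HB.instance Definition _ := [Choice of SubC by <:].
HB.instance Definition _ := GRing.SubChoice_isSubAlgebra.Build k S Cb SubC Cb_closed.
HB.instance Definition _ := GRing.SubPzRing_isSubComPzRing.Build S Cb SubC.

Let inCb x : C x -> x \in Cb. Proof. by move=> Cx; apply/asboolP. Qed.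

Let PC (r : SubC) : SubC := exist _ (P (val r)) (inCb (C_P (asboolW (valP r)))).
Let jC (a : A) : SubC := exist _ (j a) (inCb (C_j a)).

(* Freeness gives an extended Rota-Baxter map S -> SubC over j; followed by the inclusion
   it is an endomorphism of S fixing j(A), hence the identity. *)
Lemma free_extRB_ind x : C x.
Proof.
have [P_lin PRB] := S_free.1; have [j_lin [j1 jM]] := S_free.2.1.
have PC_RB : is_extRB lambda kappa PC.
  by split=> [a x1 y1|x1 y1]; apply: val_inj => /=; [rewrite P_lin | rewrite PRB].
have jC_hom : alg_hom jC.
  split=> [a x1 y1|]; first by apply: val_inj => /=; rewrite j_lin.
  by split=> [|x1 y1]; apply: val_inj => /=; [rewrite j1 | rewrite jM].
have [g [[[g_lin [g1 gM]] [gP gj]] _]] := S_free.2.2 _ PC jC PC_RB jC_hom.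
suff <- : val (g x) = x by exact: asboolW (valP (g x)).
apply: (free_extRB_endo_id (h := fun x => val (g x))).
- by split=> [a x1 y1|]; [rewrite g_lin | split=> [|x1 y1]; [rewrite g1 | rewrite gM]].
- by move=> x1; rewrite gP.
- by move=> a; rewrite gj.
Qed.

End Induction.
End FreeExtRB.

(** * The bialgebra Sha_e(A) *)

Section Sha.
Variables (k : comPzRingType) (lambda kappa mu : k)
  (A AA : comAlgType k) (tA : A -> A -> AA) (AL AR : lmodType k)
  (tAL : AA -> A -> AL) (tAR : A -> AA -> AR) (DeltaA : A -> AA) (epsA : A -> k)
  (S : comAlgType k) (Pe : S -> S) (jA : A -> S)
  (SS : comAlgType k) (tS : S -> S -> SS) (SL SR : lmodType k)
  (tSL : SS -> S -> SL) (tSR : S -> SS -> SR)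
  (epse : S -> k) (jj : AA -> SS) (Pbar : SS -> SS) (Deltae : S -> SS).
Hypotheses (tA_tensor_alg : is_tensor_alg tA)
  (A_bialg : is_bialgebra tA tAL tAR DeltaA epsA)
  (S_free : is_free_comm_extRB lambda kappa Pe jA) (tS_tensor_alg : is_tensor_alg tS)
  (epse_spec : alg_hom_k epse /\ (forall a, epse (jA a) = epsA a) /\
               (forall x, epse (Pe x) = - mu * epse x))
  (jj_spec : induced tA (fun a b => tS (jA a) (jA b)) jj)
  (Pbar_spec : induced tS (fun a b => tS (Pe a) (epse b *: 1) + mu *: tS a (epse b *: 1)
                                      + tS a (Pe b)) Pbar)
  (Deltae_spec : alg_hom Deltae /\ (forall a, Deltae (jA a) = jj (DeltaA a)) /\
                 (forall x, Deltae (Pe x) = Pbar (Deltae x))).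

Let tA_tensor : is_tensor tA := tA_tensor_alg.1.
Let tS_tensor : is_tensor tS := tS_tensor_alg.1.
Let tS1 : tS 1 1 = 1 := tS_tensor_alg.2.1.
Let tSM a b c d : tS (a * c) (b * d) = tS a b * tS c d := tS_tensor_alg.2.2 a b c d.
Let Pe_lin : klinear Pe := S_free.1.1.
Let jA_lin : klinear jA := S_free.2.1.1.
Let epse_form : kform epse := epse_spec.1.1.
Let epse1 : epse 1 = 1 := epse_spec.1.2.1.
Let epseM x y : epse (x * y) = epse x * epse y := epse_spec.1.2.2 x y.
Let epse_jA a : epse (jA a) = epsA a := epse_spec.2.1 a.
Let epse_Pe x : epse (Pe x) = - mu * epse x := epse_spec.2.2 x.
Let Deltae_lin : klinear Deltae := Deltae_spec.1.1.
Let Deltae1 : Deltae 1 = 1 := Deltae_spec.1.2.1.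
Let DeltaeM x y : Deltae (x * y) = Deltae x * Deltae y := Deltae_spec.1.2.2 x y.
Let Deltae_jA a : Deltae (jA a) = jj (DeltaA a) := Deltae_spec.2.1 a.
Let Deltae_Pe x : Deltae (Pe x) = Pbar (Deltae x) := Deltae_spec.2.2 x.
Let Pbar_lin : klinear Pbar := Pbar_spec.1.
Let PbarE u v : Pbar (tS u v) = tS (Pe u) (epse v *: 1) + mu *: tS u (epse v *: 1)
                                + tS u (Pe v) := Pbar_spec.2 u v.
Let jj_lin : klinear jj := jj_spec.1.
Let jjE a b : jj (tA a b) = tS (jA a) (jA b) := jj_spec.2 a b.
Let DeltaA_lin : klinear DeltaA := A_bialg.1.1.
Let epsA_form : kform epsA := A_bialg.2.1.1.

Lemma epse_scalar c : epse (c *: 1) = c.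
Proof. by rewrite (kformZ epse_form) epse1 mulr1. Qed.

(* g (Delta_e x) is an extended Rota-Baxter endomorphism of Sha_e(A) fixing j_A(A). *)
Lemma lift_counit_law (f : S -> S -> S) (fA : A -> A -> A) (g : SS -> S) :
  kbilinear f -> induced tS f g -> f 1 1 = 1 ->
  (forall a b c d, f (a * c) (b * d) = f a b * f c d) ->
  (forall u v, f (Pe u) (epse v *: 1) + mu *: f u (epse v *: 1) + f u (Pe v) = Pe (f u v)) ->
  kbilinear fA -> (forall a b, f (jA a) (jA b) = jA (fA a b)) ->
  (forall gA, induced tA fA gA -> forall a, gA (DeltaA a) = a) ->
  forall x, g (Deltae x) = x.
Proof.
move=> f_bil [g_lin gE] f11 fM fP fA_bil fj A_counit.
pose gA := tensor_lift tA fA.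
have g_jj : forall Y, g (jj Y) = jA (gA Y).
  apply: (tensor_ext tA_tensor (klinear_comp jj_lin g_lin)
    (klinear_comp (tensor_lift_linear tA_tensor fA_bil) jA_lin)) => a b.
  by rewrite jjE gE fj (tensor_liftE tA_tensor).
have g_Pbar : forall Z, g (Pbar Z) = Pe (g Z).
  apply: (tensor_ext tS_tensor (klinear_comp Pbar_lin g_lin) (klinear_comp g_lin Pe_lin)).
  by move=> u v; rewrite PbarE !(klinearD g_lin) (klinearZ g_lin) !gE.
have mul_bil : kbilinear (fun a b : S => a * b).
  exact: kbilinear_mul (@klinear_id _ S) (@klinear_id _ S).
apply: (free_extRB_endo_id S_free).
- split; first exact: klinear_comp Deltae_lin g_lin.
  split; first by rewrite Deltae1 -tS1 gE.
  move=> x y; rewrite DeltaeM (tensor_alg_multiplicative tS_tensor_alg mul_bil g_lin) //.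
  by move=> a b c d; rewrite !gE.
- by move=> x; rewrite Deltae_Pe g_Pbar.
- by move=> a; rewrite Deltae_jA g_jj A_counit //; exact: tensor_liftP.
Qed.

Lemma counit_left g : induced tS (fun a b => epse a *: b) g -> forall x, g (Deltae x) = x.
Proof.
move=> g_ind; apply: (lift_counit_law (fA := fun a b => epsA a *: b)
  (kbilinear_forml epse_form S) g_ind).
- by rewrite epse1 scale1r.
- by move=> a b c d; rewrite epseM -scalerAl -scalerAr scalerA.
- move=> u v; rewrite epse_Pe (klinearZ Pe_lin) [mu *: _]scalerA mulNr scaleNr.
  by rewrite addNr add0r.
- exact: kbilinear_forml epsA_form A.
- by move=> a b; rewrite epse_jA (klinearZ jA_lin).
- exact: A_bialg.2.2.2.1.
Qed.

Lemma counit_right g : induced tS (fun a b => epse b *: a) g -> forall x, g (Deltae x) = x.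
Proof.
move=> g_ind; apply: (lift_counit_law (fA := fun a b => epsA b *: a)
  (kbilinear_formr epse_form S) g_ind).
- by rewrite epse1 scale1r.
- by move=> a b c d; rewrite epseM -scalerAl -scalerAr scalerA mulrC.
- move=> u v; rewrite !epse_scalar epse_Pe (klinearZ Pe_lin) [mu *: _]scalerA mulNr scaleNr.
  by rewrite addrK.
- exact: kbilinear_formr epsA_form A.
- by move=> a b; rewrite epse_jA (klinearZ jA_lin).
- exact: A_bialg.2.2.2.2.
Qed.

(* The operator Pbar on an arbitrary tensor product X (x) Y; on (S (x) S) (x) S and
   S (x) (S (x) S) it gives the operators that Delta_e (x) id and id (x) Delta_e
   intertwine with Pbar. *)
Section BarOperator.
Variables (X Y Z : lmodType k) (tZ : X -> Y -> Z) (PX : X -> X) (PY : Y -> Y)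
  (eY : Y -> k) (oneY : Y).
Hypotheses (tZ_tensor : is_tensor tZ) (PX_lin : klinear PX) (PY_lin : klinear PY)
  (eY_form : kform eY).

Definition bar_op : Z -> Z :=
  tensor_lift tZ (fun x y => tZ (PX x) (eY y *: oneY) + mu *: tZ x (eY y *: oneY) + tZ x (PY y)).

Let bar_bilinear :
  kbilinear (fun x y => tZ (PX x) (eY y *: oneY) + mu *: tZ x (eY y *: oneY) + tZ x (PY y)).
Proof.
have eY1_lin : klinear (fun y => eY y *: oneY).
  by move=> a y y'; rewrite eY_form scalerDl scalerA.
split=> [x|y].
  apply: klinear_add; last exact: klinear_comp PY_lin (tensor_linearl tZ_tensor _).
  apply: klinear_add; first exact: klinear_comp eY1_lin (tensor_linearl tZ_tensor _).
  exact: klinear_scale (klinear_comp eY1_lin (tensor_linearl tZ_tensor _)).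
apply: klinear_add; last exact: tensor_linearr.
apply: klinear_add; first exact: klinear_comp PX_lin (tensor_linearr tZ_tensor _).
exact: klinear_scale (tensor_linearr tZ_tensor _).
Qed.

Lemma bar_op_linear : klinear bar_op.
Proof. exact: (tensor_lift_linear tZ_tensor bar_bilinear). Qed.

Lemma bar_opE x y :
  bar_op (tZ x y) = tZ (PX x) (eY y *: oneY) + mu *: tZ x (eY y *: oneY) + tZ x (PY y).
Proof. exact: (tensor_liftE tZ_tensor bar_bilinear). Qed.

End BarOperator.

Definition epse_tensor (Y : SS) : k := epse (tensor_lift tS (fun a b => epse a *: b) Y).

Lemma epse_tensor_form : kform epse_tensor.
Proof.
move=> a Y Y'; rewrite /epse_tensor.
by rewrite (tensor_lift_linear tS_tensor (kbilinear_forml epse_form S)) epse_form.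
Qed.

Lemma epse_tensorE u v : epse_tensor (tS u v) = epse u * epse v.
Proof.
by rewrite /epse_tensor (tensor_liftE tS_tensor (kbilinear_forml epse_form S)) (kformZ epse_form).
Qed.

Lemma epse_tensor_Deltae x : epse_tensor (Deltae x) = epse x.
Proof.
rewrite /epse_tensor counit_left //.
exact: (tensor_liftP tS_tensor (kbilinear_forml epse_form S)).
Qed.

Section Coassociativity.
Hypotheses (tAL_tensor : is_tensor tAL) (tAR_tensor : is_tensor tAR)
  (tSL_tensor : is_tensor tSL) (tSR_tensor : is_tensor tSR).
Variables (f1 : SS -> SL) (f2 : SS -> SR) (al : SL -> SR).
Hypotheses (f1_ind : induced tS (fun a b => tSL (Deltae a) b) f1)
  (f2_ind : induced tS (fun a b => tSR a (Deltae b)) f2)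
  (al_assoc : assoc_spec tS tSL tSR al).

Let f1_lin : klinear f1 := f1_ind.1.
Let f1E a b : f1 (tS a b) = tSL (Deltae a) b := f1_ind.2 a b.
Let f2_lin : klinear f2 := f2_ind.1.
Let f2E a b : f2 (tS a b) = tSR a (Deltae b) := f2_ind.2 a b.
Let al_lin : klinear al := al_assoc.1.
Let alE a b c : al (tSL (tS a b) c) = tSR a (tS b c) := al_assoc.2 a b c.

Let mulL := tensor_mul tSL.
Let mulR := tensor_mul tSR.
Let mulL_bil : kbilinear mulL := tensor_mul_bilinear tSL_tensor.
Let mulR_bil : kbilinear mulR := tensor_mul_bilinear tSR_tensor.

Lemma f1_mul Z Z' : f1 (Z * Z') = mulL (f1 Z) (f1 Z').
Proof.
apply: (tensor_alg_multiplicative tS_tensor_alg mulL_bil f1_lin) => a b c d.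
by rewrite !f1E DeltaeM /mulL (tensor_mulE tSL_tensor).
Qed.

Lemma f2_mul Z Z' : f2 (Z * Z') = mulR (f2 Z) (f2 Z').
Proof.
apply: (tensor_alg_multiplicative tS_tensor_alg mulR_bil f2_lin) => a b c d.
by rewrite !f2E DeltaeM /mulR (tensor_mulE tSR_tensor).
Qed.

Lemma al_mul E E' : al (mulL E E') = mulR (al E) (al E').
Proof.
move: E; apply: (tensor3_ext tS_tensor tSL_tensor (klinear_comp (mulL_bil.2 E') al_lin)
  (klinear_comp al_lin (mulR_bil.2 (al E')))) => a b c.
move: E'; apply: (tensor3_ext tS_tensor tSL_tensor (klinear_comp (mulL_bil.1 _) al_lin)
  (klinear_comp al_lin (mulR_bil.1 _))) => a' b' c'.
by rewrite /mulL /mulR !(tensor_mulE tSL_tensor) -tSM !alE (tensor_mulE tSR_tensor) -tSM.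
Qed.

Let PL := bar_op tSL Pbar Pe epse 1.
Let PR := bar_op tSR Pe Pbar epse_tensor 1.
Let PL_lin : klinear PL := bar_op_linear 1 tSL_tensor Pbar_lin Pe_lin epse_form.
Let PR_lin : klinear PR := bar_op_linear 1 tSR_tensor Pe_lin Pbar_lin epse_tensor_form.
Let PLE := bar_opE 1 tSL_tensor Pbar_lin Pe_lin epse_form.
Let PRE := bar_opE 1 tSR_tensor Pe_lin Pbar_lin epse_tensor_form.

Lemma f1_Pbar Z : f1 (Pbar Z) = PL (f1 Z).
Proof.
move: Z; apply: (tensor_ext tS_tensor (klinear_comp Pbar_lin f1_lin) (klinear_comp f1_lin PL_lin)).
by move=> u v; rewrite PbarE !(klinearD f1_lin) (klinearZ f1_lin) !f1E /PL PLE Deltae_Pe.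
Qed.

Lemma f2_Pbar Z : f2 (Pbar Z) = PR (f2 Z).
Proof.
move: Z; apply: (tensor_ext tS_tensor (klinear_comp Pbar_lin f2_lin) (klinear_comp f2_lin PR_lin)).
move=> u v; rewrite PbarE !(klinearD f2_lin) (klinearZ f2_lin) !f2E /PR PRE Deltae_Pe.
by rewrite epse_tensor_Deltae (klinearZ Deltae_lin) Deltae1.
Qed.

Lemma al_PL E : al (PL E) = PR (al E).
Proof.
move: E; apply: (tensor3_ext tS_tensor tSL_tensor (klinear_comp PL_lin al_lin)
  (klinear_comp al_lin PR_lin)) => u v w.
rewrite alE /PL /PR PLE PRE PbarE epse_tensorE !(klinearD (tensor_linearr tSL_tensor _)).
rewrite (klinearZ (tensor_linearr tSL_tensor _)) !(klinearD al_lin) !(klinearZ al_lin) !alE.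
have -> : tS (epse v *: 1) (epse w *: 1) = (epse v * epse w) *: 1 :> SS.
  rewrite (klinearZ (tensor_linearr tS_tensor _)) (klinearZ (tensor_linearl tS_tensor _)).
  by rewrite tS1 scalerA mulrC.
rewrite PbarE !(klinearD (tensor_linearl tSR_tensor _)) !(klinearZ (tensor_linearl tSR_tensor _)).
by rewrite -!addrA.
Qed.

Let f1A := tensor_lift tA (fun a b => tAL (DeltaA a) b).
Let f2A := tensor_lift tA (fun a b => tAR a (DeltaA b)).
Let alA := assoc_map tA tAL tAR.
Let JL := tensor_lift tAL (fun Y c => tSL (jj Y) (jA c)).
Let JR := tensor_lift tAR (fun a Y => tSR (jA a) (jj Y)).

Let f1A_bil : kbilinear (fun a b => tAL (DeltaA a) b).
Proof.
split=> [m|n]; first exact: tensor_linearl.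
exact: klinear_comp DeltaA_lin (tensor_linearr tAL_tensor n).
Qed.

Let f2A_bil : kbilinear (fun a b => tAR a (DeltaA b)).
Proof.
split=> [m|n]; last exact: tensor_linearr.
exact: klinear_comp DeltaA_lin (tensor_linearl tAR_tensor m).
Qed.

Let JL_bil : kbilinear (fun Y c => tSL (jj Y) (jA c)).
Proof.
split=> [Y|c]; first exact: klinear_comp jA_lin (tensor_linearl tSL_tensor _).
exact: klinear_comp jj_lin (tensor_linearr tSL_tensor _).
Qed.

Let JR_bil : kbilinear (fun a Y => tSR (jA a) (jj Y)).
Proof.
split=> [a|Y]; first exact: klinear_comp jj_lin (tensor_linearl tSR_tensor _).
exact: klinear_comp jA_lin (tensor_linearr tSR_tensor _).
Qed.

Lemma f1_jj Y : f1 (jj Y) = JL (f1A Y).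
Proof.
move: Y; apply: (tensor_ext tA_tensor (klinear_comp jj_lin f1_lin)
  (klinear_comp (tensor_lift_linear tA_tensor f1A_bil) (tensor_lift_linear tAL_tensor JL_bil))).
by move=> a b; rewrite jjE f1E (tensor_liftE tA_tensor) // (tensor_liftE tAL_tensor) // Deltae_jA.
Qed.

Lemma f2_jj Y : f2 (jj Y) = JR (f2A Y).
Proof.
move: Y; apply: (tensor_ext tA_tensor (klinear_comp jj_lin f2_lin)
  (klinear_comp (tensor_lift_linear tA_tensor f2A_bil) (tensor_lift_linear tAR_tensor JR_bil))).
by move=> a b; rewrite jjE f2E (tensor_liftE tA_tensor) // (tensor_liftE tAR_tensor) // Deltae_jA.
Qed.

Lemma al_JL W : al (JL W) = JR (alA W).
Proof.
have alA_spec := assoc_mapP tA_tensor tAL_tensor tAR_tensor.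
move: W; apply: (tensor3_ext tA_tensor tAL_tensor
  (klinear_comp (tensor_lift_linear tAL_tensor JL_bil) al_lin)
  (klinear_comp alA_spec.1 (tensor_lift_linear tAR_tensor JR_bil))) => a b c.
rewrite (tensor_liftE tAL_tensor) // jjE alE alA_spec.2.
by rewrite (tensor_liftE tAR_tensor) // jjE.
Qed.

Lemma coassociative x : al (f1 (Deltae x)) = f2 (Deltae x).
Proof.
have A_coassoc := A_bialg.2.2.1 f1A f2A alA (tensor_liftP tA_tensor f1A_bil)
  (tensor_liftP tA_tensor f2A_bil) (assoc_mapP tA_tensor tAL_tensor tAR_tensor).
elim/(free_extRB_ind S_free): x => [a x y IHx IHy|x y IHx IHy|a|x IHx].
- by rewrite Deltae_lin f1_lin al_lin IHx IHy f2_lin.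
- by rewrite DeltaeM f1_mul al_mul IHx IHy f2_mul.
- by rewrite Deltae_jA f1_jj al_JL A_coassoc f2_jj.
- by rewrite Deltae_Pe f1_Pbar al_PL IHx f2_Pbar.
Qed.

End Coassociativity.

(** * The filtration of Sha_e(A) *)

Section Filtration.
Variable Af : nat -> A -> Prop.
Hypothesis A_connected : is_connected_filtered tA DeltaA epsA Af.

Let A_filtered := A_connected.1.
Let jA1 : jA 1 = 1 := S_free.2.1.2.1.
Let jAM x y : jA (x * y) = jA x * jA y := S_free.2.1.2.2 x y.
Let PeRB := S_free.1.2.
Let Sf := sha_filtration Pe jA Af.
Let word := sha_word Pe jA.

Lemma degA_exists a : exists d, is_deg Af a d.
Proof.
have [n Hn] := A_filtered.2.2.1 a.
have e : exists n, `[< Af n a >] by exists n; apply/asboolP.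
case: (ex_minnP e) => m /asboolP Hm m_min.
by exists m; split=> // e' He'; apply: m_min; apply/asboolP.
Qed.

Definition degA (a : A) : nat := projT1 (cid (degA_exists a)).

Lemma degAP a : is_deg Af a (degA a). Proof. exact: projT2 (cid (degA_exists a)). Qed.
Lemma Af_degA a : Af (degA a) a. Proof. exact: (degAP a).1. Qed.
Lemma degA_min a e : Af e a -> (degA a <= e)%N. Proof. exact: (degAP a).2. Qed.

Lemma is_deg_degA a d : is_deg Af a d -> d = degA a.
Proof.
move=> [Ha d_min]; apply/eqP; rewrite eqn_leq (degA_min Ha) andbT.
by apply: d_min; apply: Af_degA.
Qed.

Lemma degA1 : degA 1 = 0%N.
Proof.
by apply/eqP; rewrite -leqn0 degA_min //; apply/(A_connected.2 1).2; exists 1; rewrite scale1r.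
Qed.

Lemma degAM a b : (degA (a * b) <= degA a + degA b)%N.
Proof. by apply: degA_min; apply: A_filtered.2.2.2.1; apply: Af_degA. Qed.

Definition word_deg (a0 : A) (l : seq A) : nat := (sumn (map degA (a0 :: l)) + size l)%N.

Lemma word_deg_nil a0 : word_deg a0 [::] = degA a0.
Proof. by rewrite /word_deg /= !addn0. Qed.

Lemma word_deg_cons a0 a1 l : word_deg a0 (a1 :: l) = (degA a0 + word_deg a1 l).+1.
Proof. by rewrite /word_deg /= addnS !addnA. Qed.

Lemma Sf_word n a0 l : (word_deg a0 l <= n)%N -> Sf n (word a0 l).
Proof.
move=> le_n; apply: span_gen; exists a0, l, (map degA (a0 :: l)).
split=> //; split; first by rewrite size_map.
by split=> // i lt_i; rewrite (nth_map a0) //; apply: degAP.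
Qed.

Lemma Sf_generator_word n z : (exists (a0 : A) (l : seq A) (ds : seq nat),
    z = sha_word Pe jA a0 l /\ size ds = (size l).+1 /\
    (forall i, (i < (size l).+1)%N -> is_deg Af (nth a0 (a0 :: l) i) (nth 0%N ds i)) /\
    (sumn ds + size l <= n)%N) ->
  exists a0 l, z = word a0 l /\ (word_deg a0 l <= n)%N.
Proof.
move=> [a0 [l [ds [-> [size_ds [ds_deg le_n]]]]]]; exists a0, l; split=> //.
suff E : map degA (a0 :: l) = ds by rewrite /word_deg E.
apply: (@eq_from_nth _ 0%N); first by rewrite size_map size_ds.
by move=> i; rewrite size_map => lt_i; rewrite (nth_map a0) // -(is_deg_degA (ds_deg i lt_i)).
Qed.

Lemma Sf_ind n (M : lmodType k) (G : M -> Prop) (f : S -> M) : klinear f ->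
  (forall a0 l, (word_deg a0 l <= n)%N -> Defs.span G (f (word a0 l))) ->
  forall x, Sf n x -> Defs.span G (f x).
Proof.
move=> f_lin f_word; apply: span_linear_image => // z /Sf_generator_word[a0 [l [-> le_n]]].
exact: f_word.
Qed.

Lemma Sf_mono n m x : (n <= m)%N -> Sf n x -> Sf m x.
Proof.
move=> le_nm; apply: (Sf_ind (f := id)) => // a0 l le_n.
by apply: Sf_word; apply: leq_trans le_nm.
Qed.

Lemma Pe_word a0 l : Pe (word a0 l) = word 1 (a0 :: l).
Proof. by rewrite /word /= jA1 mul1r. Qed.

Lemma Sf_Pe n x : Sf n x -> Sf n.+1 (Pe x).
Proof.
apply: (Sf_ind (f := Pe)) => // a0 l le_n.
by rewrite Pe_word; apply: Sf_word; rewrite word_deg_cons degA1.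
Qed.

Lemma jA_mul_word c a0 l : jA c * word a0 l = word (c * a0) l.
Proof. by case: l => [|a1 l]; rewrite /word /= jAM // mulrA. Qed.

Lemma Sf_jA c n x : Sf n x -> Sf (degA c + n) (jA c * x).
Proof.
apply: (Sf_ind (f := fun x => jA c * x)); first exact: klinear_mull.
move=> a0 l le_n; rewrite jA_mul_word; apply: Sf_word; have := degAM c a0.
by case: l le_n => [|a1 l]; rewrite ?word_deg_nil ?word_deg_cons; lia.
Qed.

Lemma Sf_scalar n c : Sf n (c *: 1).
Proof.
rewrite -[c *: 1]addr0; apply: span_comb; last exact: span0.
by rewrite -jA1; apply: (Sf_word (l := [::])); rewrite word_deg_nil degA1.
Qed.

(* N bounds the number of P's: the Rota-Baxter identity expresses P(u) P(v) through
   products of words with fewer P's. *)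
Lemma Sf_word_mul N a0 l b0 l' : (size l + size l' <= N)%N ->
  Sf (word_deg a0 l + word_deg b0 l') (word a0 l * word b0 l').
Proof.
elim: N a0 l b0 l' => [|N IH] a0 l b0 l' le_N.
  case: l le_N => [|? ?] //; case: l' => [|? ?] // _.
  rewrite !word_deg_nil /word /= -jAM; apply: (Sf_word (l := [::])).
  by rewrite word_deg_nil degAM.
case: l le_N => [|a1 l] le_N.
  by rewrite word_deg_nil; apply: Sf_jA; apply: Sf_word.
case: l' le_N => [|b1 l'] le_N.
  by rewrite mulrC addnC word_deg_nil; apply: Sf_jA; apply: Sf_word.
have -> : word a0 (a1 :: l) * word b0 (b1 :: l') =
    jA (a0 * b0) * (Pe (word a1 l) * Pe (word b1 l')) by rewrite /word /= jAM mulrACA.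
rewrite PeRB !word_deg_cons.
apply: Sf_mono (Sf_jA (a0 * b0) (_ : Sf (word_deg a1 l + word_deg b1 l').+2 _));
  first by have := degAM a0 b0; lia.
have Huv := IH a1 l b1 l' ltac:(move: le_N => /=; lia).
apply: spanD; last by apply: spanZ; apply: Sf_mono Huv; lia.
apply: spanD; last by apply: spanZ; apply: Sf_mono (Sf_Pe Huv); lia.
apply: spanD.
  have := Sf_Pe (IH a1 l 1 (b1 :: l') ltac:(move: le_N => /=; lia)).
  by rewrite -Pe_word word_deg_cons degA1; apply: Sf_mono; lia.
have := Sf_Pe (IH 1 (a1 :: l) b1 l' ltac:(move: le_N => /=; lia)).
by rewrite -Pe_word word_deg_cons degA1; apply: Sf_mono; lia.
Qed.

Lemma Sf_mul p q x y : Sf p x -> Sf q y -> Sf (p + q) (x * y).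
Proof.
move=> Sx Sy; apply: (Sf_ind (f := fun x => x * y)) Sx; first exact: klinear_mulr.
move=> a0 l le_p; apply: (Sf_ind (f := fun y => word a0 l * y)) Sy; first exact: klinear_mull.
move=> b0 l' le_q; have := @Sf_word_mul _ a0 l b0 l' (leqnn _).
by apply: Sf_mono; lia.
Qed.

Lemma Sf_exhaustive x : exists n, Sf n x.
Proof.
elim/(free_extRB_ind S_free): x => [a x y [n Sx] [m Sy]|x y [n Sx] [m Sy]|a|x [n Sx]].
- exists (maxn n m); apply: span_comb.
    exact: Sf_mono (leq_maxl n m) Sx.
  exact: Sf_mono (leq_maxr n m) Sy.
- by exists (n + m)%N; apply: Sf_mul.
- by exists (degA a); apply: (Sf_word (l := [::])); rewrite word_deg_nil.
- by exists n.+1; apply: Sf_Pe.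
Qed.

Lemma Sf0_scalar x : Sf 0 x -> exists c, x = c *: 1.
Proof.
elim=> [|z /Sf_generator_word[a0 [[|a1 l] [-> le_0]]]|a x1 y1 _ [c1 ->] _ [c2 ->]].
- by exists 0; rewrite scale0r.
- have /(A_connected.2 a0).1[c ->] : Af 0 a0.
    by move: le_0; rewrite word_deg_nil leqn0 => /eqP <-; apply: Af_degA.
  by exists c; rewrite /word /= (klinearZ jA_lin) jA1.
- by rewrite word_deg_cons in le_0.
- by exists (a * c1 + c2); rewrite scalerDl scalerA.
Qed.

Definition TSf (n : nat) : SS -> Prop :=
  Defs.span (fun z => exists p q u v, (p + q = n)%N /\ Sf p u /\ Sf q v /\ z = tS u v).

Lemma TSf_tensor p q u v : Sf p u -> Sf q v -> TSf (p + q) (tS u v).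
Proof. by move=> Su Sv; apply: span_gen; exists p, q, u, v. Qed.

Lemma TSf_mono n m Z : (n <= m)%N -> TSf n Z -> TSf m Z.
Proof.
move=> le_nm; apply: (span_linear_image (f := id)) => // _ [p [q [u [v [Epq [Su [Sv ->]]]]]]].
rewrite (_ : m = p + (q + (m - n)))%N; last by lia.
by apply: TSf_tensor => //; apply: Sf_mono Sv; lia.
Qed.

Lemma TSf_mul p q Z Z' : TSf p Z -> TSf q Z' -> TSf (p + q) (Z * Z').
Proof.
move=> TZ TZ'; apply: (span_linear_image (f := fun Z => Z * Z')) TZ; first exact: klinear_mulr.
move=> _ [p1 [q1 [u [v [<- [Su [Sv ->]]]]]]].
apply: (span_linear_image (f := fun Z' => tS u v * Z')) TZ'; first exact: klinear_mull.
move=> _ [p2 [q2 [u' [v' [E2 [Su' [Sv' ->]]]]]]].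
rewrite -tSM (_ : (p1 + q1 + q = (p1 + p2) + (q1 + q2))%N); last by lia.
by apply: TSf_tensor; apply: Sf_mul.
Qed.

Lemma TSf_Pbar n Z : TSf n Z -> TSf n.+1 (Pbar Z).
Proof.
apply: span_linear_image => // _ [p [q [u [v [<- [Su [Sv ->]]]]]]].
rewrite PbarE; apply: spanD; first apply: spanD.
- by rewrite -addSn; apply: TSf_tensor; [apply: Sf_Pe | apply: Sf_scalar].
- by rewrite -addSn; apply: spanZ; apply: TSf_tensor; [apply: Sf_mono Su | apply: Sf_scalar].
- by rewrite -addnS; apply: TSf_tensor => //; apply: Sf_Pe.
Qed.

Lemma TSf_jj n a : Af n a -> TSf n (jj (DeltaA a)).
Proof.
move=> Ha; apply: span_linear_image (A_filtered.2.2.2.2.1 n a Ha) => //.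
move=> _ [p [q [u [v [<- [Hu [Hv ->]]]]]]].
rewrite jjE; apply: TSf_tensor; apply: (Sf_word (l := [::]));
  by rewrite word_deg_nil; apply: degA_min.
Qed.

Lemma TSf_Deltae_word a0 l : TSf (word_deg a0 l) (Deltae (word a0 l)).
Proof.
elim: l a0 => [|a1 l IH] a0.
  by rewrite word_deg_nil /word /= Deltae_jA; apply: TSf_jj; apply: Af_degA.
rewrite word_deg_cons /word /= DeltaeM Deltae_jA Deltae_Pe -addnS.
by apply: TSf_mul; [apply: TSf_jj; apply: Af_degA | apply: TSf_Pbar; apply: IH].
Qed.

Lemma TSf_Deltae n x : Sf n x -> TSf n (Deltae x).
Proof. by apply: Sf_ind => // a0 l le_n; apply: TSf_mono le_n (TSf_Deltae_word a0 l). Qed.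

Lemma sha_connected_filtered : is_connected_filtered tS Deltae epse Sf.
Proof.
split; last by move=> x; split; [exact: Sf0_scalar | move=> [c ->]; exact: Sf_scalar].
split; first by move=> n; split; [exact: span0 | move=> a x y; exact: span_comb].
split; first by move=> n x; apply: Sf_mono.
split; first exact: Sf_exhaustive.
split; first by move=> p q x y; apply: Sf_mul.
split; first by move=> n x; apply: TSf_Deltae.
move=> n; split; first by move=> c; apply: Sf_scalar.
split; last by move=> c _; rewrite epse_scalar => ->; rewrite scale0r.
move=> x Sx; exists (epse x), (x - epse x *: 1); split.
  by apply: spanD => //; rewrite -scaleNr; apply: Sf_scalar.
by rewrite (kformB epse_form) epse_scalar subrr addrC subrK.
Qed.

End Filtration.

End Sha.

Unset Implicit Arguments.

Theorem theorem4p11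
  (k : comPzRingType) (lambda kappa mu : k)
  (Hmu : mu ^+ 2 - lambda * mu + kappa = 0)
  (* the connected filtered commutative bialgebra A *)
  (A : comAlgType k)
  (AA : comAlgType k) (tA : A -> A -> AA) (HtA : is_tensor_alg tA)
  (AL AR : lmodType k) (tAL : AA -> A -> AL) (tAR : A -> AA -> AR)
  (HtAL : is_tensor tAL) (HtAR : is_tensor tAR)
  (DeltaA : A -> AA) (epsA : A -> k) (Af : nat -> A -> Prop)
  (HA : is_bialgebra tA tAL tAR DeltaA epsA)
  (HAf : is_connected_filtered tA DeltaA epsA Af)
  (* the free commutative extended Rota-Baxter algebra Sha_e(A) *)
  (S : comAlgType k) (Pe : S -> S) (jA : A -> S)
  (HS : is_free_comm_extRB lambda kappa Pe jA)
  (SS : comAlgType k) (tS : S -> S -> SS) (HtS : is_tensor_alg tS)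
  (SL SR : lmodType k) (tSL : SS -> S -> SL) (tSR : S -> SS -> SR)
  (HtSL : is_tensor tSL) (HtSR : is_tensor tSR)
  (* the counit eps_e *)
  (epse : S -> k)
  (Hepse : alg_hom_k epse /\ (forall a, epse (jA a) = epsA a) /\
           (forall x, epse (Pe x) = - mu * epse x))
  (* j_A (x) j_A : A (x) A -> Sha_e(A) (x) Sha_e(A) *)
  (jj : AA -> SS) (Hjj : induced tA (fun a b => tS (jA a) (jA b)) jj)
  (* the operator Pbar on Sha_e(A) (x) Sha_e(A) *)
  (Pbar : SS -> SS)
  (HPbar : induced tS (fun a b => tS (Pe a) (epse b *: 1) + mu *: tS a (epse b *: 1)
                                  + tS a (Pe b)) Pbar)
  (* the coproduct Delta_e *)
  (Deltae : S -> SS)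
  (HDeltae : alg_hom Deltae /\ (forall a, Deltae (jA a) = jj (DeltaA a)) /\
             (forall x, Deltae (Pe x) = Pbar (Deltae x))) :
  is_bialgebra tS tSL tSR Deltae epse /\
  is_connected_filtered tS Deltae epse (sha_filtration Pe jA Af) /\
  has_antipode tS Deltae epse.
Proof.
(* Hmu is what makes eps_e and Delta_e exist; both are given here. *)
have S_bialg : is_bialgebra tS tSL tSR Deltae epse.
  split; first exact: HDeltae.1.
  split; first exact: Hepse.1.
  split; first exact: (coassociative HtA HA HS HtS Hepse Hjj HPbar HDeltae HtAL HtAR HtSL HtSR).
  split; first exact: (counit_left HtA HA HS HtS Hepse Hjj HPbar HDeltae).
  exact: (counit_right HtA HA HS HtS Hepse Hjj HPbar HDeltae).
have S_connected := sha_connected_filtered HS HtS Hepse Hjj HPbar HDeltae HAf.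
split=> //; split=> //.
exact: (connected_filtered_antipode HtS HtSL HtSR S_bialg S_connected).
Qed.
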